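(* Let $q\in\mathbb{C}$ with $q^4\neq1$, let $\lambda$ be a strict partition of $n$, let $\Lambda$ be a standard shifted tableau of shape $\lambda$, let $1\le k<n$, and put $a=m_k$, $b=m_{k+1}$. (a) Whenever $q_k\neq q_{k+1}^{\pm1}$ (so that $\beta_k$ is defined), the quantity $\beta_k$ does not change if $q_k$ is replaced by $q_k^{-1}$ or $q_{k+1}$ by $q_{k+1}^{-1}$, and $$\beta_k=\frac{[a+b+2][a+b][a-b+1][a-b-1]}{[a+b+1]^2[a-b]^2}.$$ (b) If $q$ is not a root of unity, then $q_k\neq q_{k+1}^{\pm1}$, so $\beta_k$ is defined.
   Context: $[k]=(q^k-q^{-k})/(q-q^{-1})$ and $[m]_{q^2}=(q^{2m}-q^{-2m})/(q^2-q^{-2})$. For each integer $m\ge0$ fix a square root $s_m$ of $[m+1]_{q^2}[m]_{q^2}$ and set $x_m=[m+1]_{q^2}-[m]_{q^2}-(q-q^{-1})s_m$. A strict partition $\lambda=(\lambda_1>\dots>\lambda_r>0)$ has shifted diagram consisting of boxes $(i,j)$ with $1\le i\le r$, $i\le j\le i+\lambda_i-1$; a standard shifted tableau is a filling with $1,\dots,n$ increasing along rows and down columns. For such $\Lambda$ and $1\le k\le n$, let $(i_k,j_k)$ be the box containing $k$, $m_k=j_k-i_k$, and $q_k=x_{m_k}$. When $q_k\neq q_{k+1}^{\pm1}$ define $\beta_k=1-(q-q^{-1})^2\left(\frac{q_{k+1}^{-1}q_k}{(q_{k+1}^{-1}q_k-1)^2}+\frac{q_{k+1}q_k}{(q_{k+1}q_k-1)^2}\right)$.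 *)

(* The base field is C = R[i] for an arbitrary realType R
   (i.e. the complex numbers). *)
From HB Require Import structures.
From mathcomp Require Import all_boot all_order all_algebra.
From mathcomp Require Import complex.
From mathcomp Require Import reals.
Set Implicit Arguments. Unset Strict Implicit. Unset Printing Implicit Defensive.
Import Order.TTheory GRing.Theory Num.Theory.
Local Open Scope ring_scope.

Definition strict_partition (la : seq nat) : bool :=
  sorted (fun x y : nat => (y < x)%N) la && all (fun x : nat => (0 < x)%N) la.

Definition partition_of (la : seq nat) (n : nat) : bool :=
  strict_partition la && (sumn la == n).

(* lambda_i with 1-based index i *)
Definition part (la : seq nat) (i : nat) : nat := nth 0%N la i.-1.

(* the box (i,j) (1-based) lies in the shifted diagram of lambda:
   1 <= i <= r and i <= j <= i + lambda_i - 1 *)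
Definition in_shifted (la : seq nat) (b : nat * nat) : bool :=
  let: (i, j) := b in
  [&& (1 <= i)%N, (i <= size la)%N, (i <= j)%N & (j + 1 <= i + part la i)%N].

(* A standard shifted tableau of shape lambda (with n boxes) is encoded by the
   map  pos : k |-> (i_k, j_k)  sending each entry k in {1,...,n} to the box
   containing it. *)
Definition standard_shifted_tableau (la : seq nat) (n : nat)
    (pos : nat -> nat * nat) : Prop :=
  [/\ (forall k, (1 <= k <= n)%N -> in_shifted la (pos k)),
      (forall k l, (1 <= k <= n)%N -> (1 <= l <= n)%N -> pos k = pos l -> k = l),
      (forall b, in_shifted la b -> exists2 k, (1 <= k <= n)%N & pos k = b),
      (forall k l, (1 <= k <= n)%N -> (1 <= l <= n)%N ->
         (pos k).1 = (pos l).1 -> ((pos k).2 < (pos l).2)%N -> (k < l)%N) &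
      (forall k l, (1 <= k <= n)%N -> (1 <= l <= n)%N ->
         (pos k).2 = (pos l).2 -> ((pos k).1 < (pos l).1)%N -> (k < l)%N)].

Definition mcont (pos : nat -> nat * nat) (k : nat) : nat :=
  ((pos k).2 - (pos k).1)%N.

Section QNumbers.
Variable F : fieldType.
Variable q : F.

Definition qnum (k : int) : F := (q ^ k - q ^ (- k)) / (q - q^-1).

Definition qint2 (m : nat) : F :=
  (q ^+ (2 * m) - q ^- (2 * m)) / (q ^+ 2 - q ^- 2).

(* x_m = [m+1]_{q^2} - [m]_{q^2} - (q - q^-1) s_m, for a chosen family s of
   square roots s_m of [m+1]_{q^2}[m]_{q^2} *)
Definition xm (s : nat -> F) (m : nat) : F :=
  qint2 m.+1 - qint2 m - (q - q^-1) * s m.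

Definition beta (qk qk1 : F) : F :=
  1 - (q - q^-1) ^+ 2 *
      ((qk1^-1 * qk) / (qk1^-1 * qk - 1) ^+ 2 + (qk1 * qk) / (qk1 * qk - 1) ^+ 2).

End QNumbers.

Definition is_root_of_unity (F : nzRingType) (q : F) : Prop :=
  exists2 N : nat, (0 < N)%N & q ^+ N = 1.

(* The tableau condition forces [m_k != m_(k+1)]: consecutive entries never lie
   on the same diagonal, since along a diagonal the entries grow by at least 2.
   On the algebraic side, [x_m] and [x_m^-1] are the two roots of
   [X^2 - 2 A_m X + 1] with [A_m = [m+1]_(q^2) - [m]_(q^2)], so [x_m + x_m^-1 = 2 A_m].
   [beta] only depends on [q_k + q_k^-1] and [q_(k+1) + q_(k+1)^-1], which gives
   the inversion invariance, and substituting [2 A_a] and [2 A_b] yields the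
   closed formula.  Finally [A_a = A_b] forces [q^(2a+1) = q^(+-(2b+1))], which
   for [a != b] makes [q] a root of unity. *)

From HB Require Import structures.
From mathcomp Require Import all_boot all_order all_algebra.
From mathcomp Require Import complex reals.
From mathcomp Require Import ring zify.

Set Implicit Arguments.
Unset Strict Implicit.
Unset Printing Implicit Defensive.

Import Order.TTheory GRing.Theory Num.Theory.

Lemma strict_partition_part_ltS la i : strict_partition la ->
  (0 < i < size la)%N -> (part la i.+1 < part la i)%N.
Proof.
case/andP=> sorted_la _ /andP[i_gt0 i_lt]; rewrite /part /=.
have gtn_trans : transitive (fun x y : nat => (y < x)%N).
  by move=> x y z xy yz; apply: ltn_trans yz xy.
by apply: (sorted_ltn_nth gtn_trans 0%N sorted_la); rewrite ?inE; lia.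
Qed.

Lemma in_shifted_up la i j : strict_partition la -> (0 < i)%N ->
  in_shifted la (i.+1, j.+1) -> in_shifted la (i, j) && in_shifted la (i, j.+1).
Proof.
move=> sp i_gt0 /and4P[_ i_lt ij j_lt].
have lt_part : (part la i.+1 < part la i)%N.
  by apply: strict_partition_part_ltS; rewrite ?i_gt0.
by apply/andP; split; apply/and4P; split; lia.
Qed.

Section ShiftedTableau.
Variables (la : seq nat) (n : nat) (pos : nat -> nat * nat).
Hypotheses (sp : strict_partition la) (T : standard_shifted_tableau la n pos).

Lemma tableau_diagonal d l l' i j : (1 <= l <= n)%N -> (1 <= l' <= n)%N ->
  pos l = (i, j) -> pos l' = (i + d, j + d) -> (l + d.*2 <= l')%N.
Proof.
case: T => in_T inj_T onto_T row_T col_T hl hl' pl.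
have i_gt0 : (0 < i)%N by move: (in_T l hl); rewrite pl => /and4P[].
elim: d l' hl' => [|d IH] l' hl' pl'.
  suff -> : l = l' by rewrite addn0.
  by apply: inj_T; rewrite // pl pl' !addn0.
have box_l' := in_T l' hl'; rewrite pl' !addnS in box_l'.
have /andP[box_diag box_right] := in_shifted_up sp (ltn_addr d i_gt0) box_l'.
have [l1 hl1 pl1] := onto_T _ box_diag.
have [m hm pm] := onto_T _ box_right.
have := IH l1 hl1 pl1.
have : (l1 < m)%N by apply: row_T; rewrite ?pl1 ?pm.
have : (m < l')%N by apply: col_T; rewrite ?pm ?pl' ?addnS.
lia.
Qed.

Lemma mcont_succ_neq k : (0 < k < n)%N -> mcont pos k != mcont pos k.+1.
Proof.
move=> hk; have hk0 : (1 <= k <= n)%N by lia.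
have hk1 : (1 <= k.+1 <= n)%N by lia.
case: T => in_T inj_T _ _ _.
move: (in_T k hk0) (in_T k.+1 hk1); rewrite /mcont.
case pk: (pos k) => [i j]; case pk1: (pos k.+1) => [i' j'] /=.
move=> /and4P[_ _ ij _] /and4P[_ _ ij' _]; apply/eqP => same_diag.
have [lt_ii'|lt_i'i|eq_ii'] := ltngtP i i'.
- have : pos k.+1 = (i + (i' - i), j + (i' - i)) by rewrite pk1; congr pair; lia.
  by move/(tableau_diagonal hk0 hk1 pk); lia.
- have : pos k = (i' + (i - i'), j' + (i - i')) by rewrite pk; congr pair; lia.
  by move/(tableau_diagonal hk1 hk0 pk1); lia.
- have : pos k = pos k.+1 by rewrite pk pk1; congr pair; lia.
  by move/(inj_T _ _ hk0 hk1); lia.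
Qed.

End ShiftedTableau.

Local Open Scope ring_scope.

Lemma eq_expf_root_of_unity (F : fieldType) (q : F) m n :
  q != 0 -> q ^+ m = q ^+ n -> m != n -> is_root_of_unity q.
Proof.
wlog lt_mn : m n / (m < n)%N.
  move=> wlog_lt q0 e; case: (ltngtP m n) => // [lt|gt] _.
  - by apply: (wlog_lt m n) => //; rewrite ltn_eqF.
  - by apply: (wlog_lt n m) => //; rewrite ltn_eqF.
move=> q0 e _; exists (n - m)%N; first by rewrite subn_gt0.
apply: (mulfI (expf_neq0 m q0)).
by rewrite -exprD subnKC ?(ltnW lt_mn) // mulr1 e.
Qed.

Section Beta.
Variable F : fieldType.

Lemma addf_inv_eq (x y : F) : x != 0 -> y != 0 ->
  (x + x^-1 == y + y^-1) = (x == y) || (x == y^-1).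
Proof.
move=> x0 y0.
rewrite -subr_eq0 (_ : x + x^-1 - (y + y^-1) = (x - y) * (x - y^-1) / x).
  by rewrite !mulf_eq0 invr_eq0 (negPf x0) orbF !subr_eq0.
by field; rewrite x0 y0.
Qed.

Lemma eq_invf_mul1 (x y : F) : y != 0 -> (x == y^-1) = (x * y == 1).
Proof. by move=> y0; rewrite -div1r -{1}[x]divr1 eqr_div ?oner_neq0 // mulr1. Qed.

Lemma beta_trace (q x y : F) : x != 0 -> y != 0 -> x + x^-1 != y + y^-1 ->
  beta q x y = 1 - (q - q^-1) ^+ 2 * ((x + x^-1) * (y + y^-1) - 4)
                   / (x + x^-1 - (y + y^-1)) ^+ 2.
Proof.
move=> x0 y0; rewrite addf_inv_eq // negb_or => /andP[xy xy'].
have xy1 : x * y - 1 != 0 by rewrite subr_eq0 -eq_invf_mul1.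
have xy0 : x - y != 0 by rewrite subr_eq0.
rewrite /beta; move: (q - q^-1) => w; field.
have -> : (x * x + 1) * y + - (y * y + 1) * x = (x - y) * (x * y - 1) by ring.
by rewrite x0 y0 mulf_neq0 // [y * x]mulrC xy1 mulN1r.
Qed.

Lemma beta_invl (q x y : F) : x != 0 -> y != 0 -> x + x^-1 != y + y^-1 ->
  beta q x^-1 y = beta q x y.
Proof.
move=> x0 y0 XY; have X_inv : x^-1 + x^-1^-1 = x + x^-1 by rewrite invrK addrC.
by rewrite !beta_trace ?invr_neq0 ?X_inv.
Qed.

Lemma beta_invr (q x y : F) : x != 0 -> y != 0 -> x + x^-1 != y + y^-1 ->
  beta q x y^-1 = beta q x y.
Proof.
move=> x0 y0 XY; have Y_inv : y^-1 + y^-1^-1 = y + y^-1 by rewrite invrK addrC.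
by rewrite !beta_trace ?invr_neq0 ?Y_inv.
Qed.

End Beta.

Section QInt2.
Variables (F : fieldType) (q : F).
Hypotheses (q_neq0 : q != 0) (q4_neq1 : q ^+ 4 != 1).

Local Notation qdiff m := (qint2 q m.+1 - qint2 q m).

Lemma sqrq_sqr_sub1_neq0 : (q * q) ^+ 2 - 1 != 0.
Proof. by rewrite -expr2 -exprM subr_eq0. Qed.

Lemma sqrq_sub1_add1_neq0 : (q * q - 1 != 0) && (q * q + 1 != 0).
Proof.
have := sqrq_sqr_sub1_neq0.
by rewrite (_ : _ - 1 = (q * q - 1) * (q * q + 1)) ?mulf_eq0 ?negb_or //; ring.
Qed.

Lemma q_addV_neq0 : q + q^-1 != 0.
Proof.
case/andP: sqrq_sub1_add1_neq0 => _; apply: contra => /eqP qV0.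
have -> : q * q + 1 = (q + q^-1) * q by field.
by rewrite qV0 mul0r.
Qed.

Lemma qint2S_sub m :
  qdiff m = (q ^+ (2 * m).+1 + (q ^+ (2 * m).+1)^-1) / (q + q^-1).
Proof.
case/andP: sqrq_sub1_add1_neq0 => _ q2_add1.
rewrite /qint2 mulnS exprD (exprSr q (2 * m)).
move: (q ^+ (2 * m)) (expf_neq0 (2 * m) q_neq0) => t t0; field.
by rewrite q_neq0 q2_add1 t0 sqrq_sqr_sub1_neq0.
Qed.

Lemma qint2S_sub_sqr m :
  qdiff m ^+ 2 - (q - q^-1) ^+ 2 * (qint2 q m.+1 * qint2 q m) = 1.
Proof.
rewrite /qint2 mulnS exprD.
move: (q ^+ (2 * m)) (expf_neq0 (2 * m) q_neq0) => t t0; field.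
by rewrite q_neq0 t0 sqrq_sqr_sub1_neq0.
Qed.

Lemma qint2S_sub_inj a b : ~ is_root_of_unity q -> qdiff a = qdiff b -> a = b.
Proof.
move=> not_rou; rewrite !qint2S_sub => /(mulIf (invr_neq0 q_addV_neq0))/eqP.
rewrite addf_inv_eq ?expf_neq0 // eq_invf_mul1 ?expf_neq0 // -exprD.
case/orP=> /eqP e; last first.
  case: not_rou; rewrite -(expr0 q) in e.
  by apply: eq_expf_root_of_unity q_neq0 e _; rewrite addSn.
case: (eqVneq a b) => // neq_ab; case: not_rou.
by apply: (eq_expf_root_of_unity q_neq0 e); rewrite eqSS eqn_mul2l.
Qed.

(* [qdiff a != qdiff b] splits, through [addf_inv_eq], into the nonvanishing of the
   denominators [[a+b+1]] and [[a-b]]. *)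
Lemma qint2S_sub_beta_qnum (two_neq0 : 2 != 0 :> F) a b : qdiff a != qdiff b ->
  1 - (q - q^-1) ^+ 2 * (2 * qdiff a * (2 * qdiff b) - 4)
      / (2 * qdiff a - 2 * qdiff b) ^+ 2 =
  qnum q (a%:Z + b%:Z + 2) * qnum q (a%:Z + b%:Z)
  * qnum q (a%:Z - b%:Z + 1) * qnum q (a%:Z - b%:Z - 1)
  / (qnum q (a%:Z + b%:Z + 1) ^+ 2 * qnum q (a%:Z - b%:Z) ^+ 2).
Proof.
have sqr_expS m : q ^+ (2 * m).+1 = (q ^+ m) ^+ 2 * q by rewrite exprSr mulnC exprM.
rewrite !qint2S_sub !sqr_expS => neq_ab.
rewrite /qnum -!invr_expz !expfzDr // -!invr_expz -!exprnP !expr1.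
move: (q ^+ a) (q ^+ b) (expf_neq0 a q_neq0) (expf_neq0 b q_neq0) neq_ab.
move=> al be al0 be0 neq_ab.
have : al ^+ 2 * q + (al ^+ 2 * q)^-1 != be ^+ 2 * q + (be ^+ 2 * q)^-1.
  by apply: contra neq_ab => /eqP ->.
rewrite addf_inv_eq ?mulf_neq0 ?expf_neq0 // negb_or eq_invf_mul1 ?mulf_neq0 ?expf_neq0 //.
case/andP; rewrite -subr_eq0 => t_neq_u; rewrite -subr_eq0 => tu_neq1.
have al_be : al * al - be * be != 0.
  apply: contra t_neq_u => /eqP al_be0.
  have -> : al ^+ 2 * q - be ^+ 2 * q = (al * al - be * be) * q by ring.
  by rewrite al_be0 mul0r.
have /andP[q2_sub1 q2_add1] := sqrq_sub1_add1_neq0.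
field; rewrite q_neq0 q2_sub1 q2_add1 al0 be0 mulNr al_be /=.
have -> : al * be * q * (al * be * q) - 1 = al ^+ 2 * q * (be ^+ 2 * q) - 1 by ring.
rewrite [X in _ && (X != 0)]
  (_ : _ = 2 * (al * al - be * be) * (al ^+ 2 * q * (be ^+ 2 * q) - 1)).
  by rewrite tu_neq1 !mulf_neq0.
by ring.
Qed.

Section Xm.
Variable s : nat -> F.

Lemma xm_mul_conj m : s m ^+ 2 = qint2 q m.+1 * qint2 q m ->
  xm q s m * (qdiff m + (q - q^-1) * s m) = 1.
Proof. by move=> s_sqr; rewrite -(qint2S_sub_sqr m) -s_sqr /xm; ring. Qed.

Lemma xm_neq0 m : s m ^+ 2 = qint2 q m.+1 * qint2 q m -> xm q s m != 0.
Proof. by move=> s_sqr; rewrite -unitfE; apply/unitrPr; eexists; exact: xm_mul_conj. Qed.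

Lemma xm_addV m : s m ^+ 2 = qint2 q m.+1 * qint2 q m ->
  xm q s m + (xm q s m)^-1 = 2 * qdiff m.
Proof. by move=> s_sqr; rewrite (mulr1_eq (xm_mul_conj s_sqr)) /xm; ring. Qed.

End Xm.

End QInt2.

Theorem lemma2p30 (R : realType) (q : R[i]) (n : nat) (la : seq nat)
    (pos : nat -> nat * nat) (s : nat -> R[i]) (k : nat) :
  q != 0 -> q ^+ 4 != 1 ->
  partition_of la n ->
  standard_shifted_tableau la n pos ->
  (1 <= k)%N -> (k < n)%N ->
  (forall m : nat, s m ^+ 2 = qint2 q m.+1 * qint2 q m) ->
  let a := mcont pos k in
  let b := mcont pos k.+1 in
  let qk := xm q s a in
  let qk1 := xm q s b in
  (* (a) *)
  ((qk != qk1) && (qk != qk1^-1) ->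
     [/\ beta q qk^-1 qk1 = beta q qk qk1,
         beta q qk qk1^-1 = beta q qk qk1 &
         beta q qk qk1 =
           qnum q (a%:Z + b%:Z + 2) * qnum q (a%:Z + b%:Z)
           * qnum q (a%:Z - b%:Z + 1) * qnum q (a%:Z - b%:Z - 1)
           / (qnum q (a%:Z + b%:Z + 1) ^+ 2 * qnum q (a%:Z - b%:Z) ^+ 2)])
  /\
  (* (b) *)
  (~ is_root_of_unity q -> (qk != qk1) && (qk != qk1^-1)).
Proof.
move=> q0 q4 /andP[sp _] T k_gt0 k_lt s_sqr a b qk qk1.
have k_range : (0 < k < n)%N by rewrite k_gt0.
have two_neq0 : 2 != 0 :> R[i] by rewrite pnatr_eq0.
have qk0 : qk != 0 := xm_neq0 q0 q4 (s_sqr a).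
have qk10 : qk1 != 0 := xm_neq0 q0 q4 (s_sqr b).
have tr_qk := xm_addV q0 q4 (s_sqr a).
have tr_qk1 := xm_addV q0 q4 (s_sqr b).
split=> [qk_qk1 | not_rou].
  have XY : qk + qk^-1 != qk1 + qk1^-1 by rewrite addf_inv_eq // negb_or.
  rewrite beta_invl // beta_invr // beta_trace // tr_qk tr_qk1.
  rewrite qint2S_sub_beta_qnum //.
  by rewrite -(inj_eq (mulfI two_neq0)) -tr_qk -tr_qk1.
rewrite -negb_or -addf_inv_eq // tr_qk tr_qk1 (inj_eq (mulfI two_neq0)).
apply: contra (mcont_succ_neq sp T k_range).
by move=> /eqP/(qint2S_sub_inj q0 q4 not_rou)/eqP.
Qed.
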